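(* Let $X$ be a transitive BE-algebra, $k\in(-1,0]$, and $(X,f)$ an $([e],[e]\vee[c_k])$-ideal of $X$ such that $f(1)>\tfrac{-k-1}{2}$. Then $(X,f)$ is an $N$-ideal of $X$.
   Context: A BE-algebra is a set $X$ with a binary operation $*$ and a distinguished element $1$ such that for all $x,y,z\in X$: $x*x=1$, $x*1=1$, $1*x=x$, and $x*(y*z)=y*(x*z)$. Write $x\le y$ iff $x*y=1$. A BE-algebra is transitive if $y*z\le(x*y)*(x*z)$ for all $x,y,z\in X$. An ideal of $X$ is a nonempty subset $I\subseteq X$ such that $x*s\in I$ for all $x\in X$, $s\in I$, and $(s*(q*x))*x\in I$ for all $x\in X$ and $s,q\in I$. An $N$-structure on $X$ is a pair $(X,f)$ where $f:X\to[-1,0]$ is any function. For $t\in[-1,0]$ let $C(f;t)=\{x\in X: f(x)\le t\}$. The $N$-structure $(X,f)$ is an $N$-ideal of $X$ if for every $t\in[-1,0]$ the set $C(f;t)$ is either empty or an ideal of $X$. Fix $k\in(-1,0]$. For $x\in X$ and $t\in[-1,0)$, write $\frac{x}{t}[e]f$ if $f(x)\le t$, and $\frac{x}{t}[c_k]f$ if $f(x)+t+k+1<0$; write $\frac{x}{t}([e]\vee[c_k])f$ if at least one of these holds. The $N$-structure $(X,f)$ is an $([e],[e]\vee[c_k])$-ideal of $X$ if for all $x,y,z\in X$ and all $t,r\in[-1,0)$: (i) $f(y)\le t$ implies $\frac{x*y}{t}([e]\vee[c_k])f$; (ii) $f(x)\le t$ and $f(y)\le r$ together imply $\frac{(x*(y*z))*z}{\max\{t,r\}}([e]\vee[c_k])f$.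 *)

From Stdlib Require Import Reals.
Open Scope R_scope.

Section BE.
Context {X : Type} (op : X -> X -> X) (one : X).

Definition BE_algebra : Prop :=
  (forall x, op x x = one) /\
  (forall x, op x one = one) /\
  (forall x, op one x = x) /\
  (forall x y z, op x (op y z) = op y (op x z)).

Definition BE_le (x y : X) : Prop := op x y = one.

Definition BE_transitive : Prop :=
  forall x y z, BE_le (op y z) (op (op x y) (op x z)).

Definition BE_ideal (I : X -> Prop) : Prop :=
  (exists s, I s) /\
  (forall x s, I s -> I (op x s)) /\
  (forall x s q, I s -> I q -> I (op (op s (op q x)) x)).

Definition N_structure (f : X -> R) : Prop := forall x, -1 <= f x <= 0.

Definition C_set (f : X -> R) (t : R) : X -> Prop := fun x => f x <= t.

Definition N_ideal (f : X -> R) : Prop :=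
  forall t, -1 <= t <= 0 ->
    (forall x, ~ C_set f t x) \/ BE_ideal (C_set f t).

Definition pt_e (f : X -> R) (x : X) (t : R) : Prop := f x <= t.
Definition pt_ck (k : R) (f : X -> R) (x : X) (t : R) : Prop := f x + t + k + 1 < 0.
Definition pt_e_or_ck (k : R) (f : X -> R) (x : X) (t : R) : Prop :=
  pt_e f x t \/ pt_ck k f x t.

Definition e_eck_ideal (k : R) (f : X -> R) : Prop :=
  (forall x y t, -1 <= t < 0 -> f y <= t -> pt_e_or_ck k f (op x y) t) /\
  (forall x y z t r, -1 <= t < 0 -> -1 <= r < 0 -> f x <= t -> f y <= r ->
     pt_e_or_ck k f (op (op x (op y z)) z) (Rmax t r)).
End BE.

From Stdlib Require Import Reals Lra.
Open Scope R_scope.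

(* Write m := (-k-1)/2, so that f(1) > m by hypothesis.
   1. For a level t > m the alternative [c_k] implies [e]: f(z)+t+k+1 < 0
      gives f(z) < -t-k-1 < t.  Hence at such levels the conditions (i),(ii)
      of an ([e],[e]\/[c_k])-ideal are exactly the ideal axioms for C(f;t).
   2. f(1) is the least value of f.  If f(s) < f(1), apply (i) with x = y = s
      at the level t' = max(f(s), -k-1-f(1)) < f(1); since s*s = 1 this yields
      f(1) <= t' or f(1)+t'+k+1 < 0, both impossible by the choice of t'.
   3. Consequently C(f;t) is empty for t < f(1), and for f(1) <= t <= 0 it
      contains 1 and is closed under the ideal operations: for t = 0 it is
      all of X, and for f(1) <= t < 0 we have t > m, so step 1 applies. *)

Lemma e_or_ck_collapse {X : Type} (k : R) (f : X -> R) (z : X) (t : R) :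
  (- k - 1) / 2 < t -> pt_e_or_ck k f z t -> f z <= t.
Proof. unfold pt_e_or_ck, pt_e, pt_ck. intros Ht [Hz | Hz]; lra. Qed.

Section EeckIdeal.
Variables (X : Type) (op : X -> X -> X) (one : X) (k : R) (f : X -> R).
Hypothesis Hxx : forall x, op x x = one.
Hypothesis Hf : N_structure f.
Hypothesis Hid : e_eck_ideal op k f.
Hypothesis H1 : f one > (- k - 1) / 2.

Lemma f_one_minimal (s : X) : f one <= f s.
Proof.
  destruct (Rle_dec (f one) (f s)) as [Hle | Hgt]; [exact Hle | exfalso].
  pose proof (Hf one) as Hone; pose proof (Hf s) as Hs.
  set (t' := Rmax (f s) (- k - 1 - f one)).
  assert (Ht'_s : f s <= t') by apply Rmax_l.
  assert (Ht'_k : - k - 1 - f one <= t') by apply Rmax_r.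
  assert (Ht'_lt : t' < f one)
    by (unfold t', Rmax; destruct (Rle_dec (f s) (- k - 1 - f one)); lra).
  assert (Hss : pt_e_or_ck k f (op s s) t')
    by (apply (proj1 Hid); lra).
  rewrite Hxx in Hss.
  unfold pt_e_or_ck, pt_e, pt_ck in Hss; lra.
Qed.

Lemma C_set_ideal (t : R) : f one <= t <= 0 -> BE_ideal op (C_set f t).
Proof.
  intros Ht. unfold BE_ideal, C_set.
  split; [exists one; lra |].
  destruct (Req_dec t 0) as [Ht0 | Ht0].
  - subst t. split; intros; apply Hf.
  - assert (Hlev : -1 <= t < 0) by (pose proof (Hf one); lra).
    assert (Hm : (- k - 1) / 2 < t) by lra.
    split.
    + intros x s Hs. apply (e_or_ck_collapse k); [exact Hm |].
      exact (proj1 Hid x s t Hlev Hs).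
    + intros x s q Hs Hq. apply (e_or_ck_collapse k); [exact Hm |].
      rewrite <- (Rmax_left t t) by lra.
      exact (proj2 Hid s q x t t Hlev Hlev Hs Hq).
Qed.

End EeckIdeal.

Theorem mainTheorem10 (X : Type) (op : X -> X -> X) (one : X)
  (HBE : BE_algebra op one) (Htr : BE_transitive op one)
  (k : R) (Hk : -1 < k <= 0)
  (f : X -> R) (Hf : N_structure f)
  (Hid : e_eck_ideal op k f)
  (H1 : f one > (- k - 1) / 2) :
  N_ideal op f.
Proof.
  destruct HBE as [Hxx _].
  intros t Ht.
  destruct (Rle_dec (f one) t) as [Hone | Hone].
  -
    right. apply (C_set_ideal X op one k f); auto; lra.
  -
    left. intros x Hx. unfold C_set in Hx.
    pose proof (f_one_minimal X op one k f Hxx Hf Hid H1 x). lra.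
Qed.
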